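(* Let $1\le k\le d$ and let $\mu$ be a probability distribution on $Q_d$ with $w_i^0\ge \frac34-\frac1{4k}$ for all $i\in[d]$. Then $(\mathbf 0,\mathbf 0)$ is a $k$-local equilibrium.
   Context: $Q_d=\{0,1\}^d$ with the Hamming distance $d(X,Y)=|\{i: x_i\neq y_i\}|$. A probability distribution on $Q_d$ is a function $\mu:Q_d\to\mathbb R_{\ge0}$ with $\sum_{V\in Q_d}\mu(V)=1$, extended to subsets by $\mu(\mathcal A)=\sum_{V\in\mathcal A}\mu(V)$. For $A,B\in Q_d$ let $V(A,B)=\{X\in Q_d: d(X,A)<d(X,B)\}$ and $T(A,B)=\{X\in Q_d: d(X,A)=d(X,B)\}$. The payoffs in position $(A,B)$ are $P_1(A,B)=\mu(V(A,B))+\frac12\mu(T(A,B))$ and $P_2(A,B)=\mu(V(B,A))+\frac12\mu(T(A,B))$. The pair $(A,B)$ is a $k$-local equilibrium if $P_1(A,B)\ge P_1(A',B)$ for all $A'\in Q_d$ with $d(A,A')\le k$ and $P_2(A,B)\ge P_2(A,B')$ for all $B'\in Q_d$ with $d(B,B')\le k$. For $i\in[d]$, $w_i^0=\mu(\{X\in Q_d: x_i=0\})$. $\mathbf 0=(0,\dots,0)$. *)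

From HB Require Import structures.
From mathcomp Require Import all_boot all_order all_algebra.
Set Implicit Arguments. Unset Strict Implicit. Unset Printing Implicit Defensive.
Import Order.TTheory GRing.Theory Num.Theory.
Local Open Scope ring_scope.

(* Hypercube Q_d = {0,1}^d, a vertex is a finite function 'I_d -> bool
   (false = 0, true = 1). *)
Definition cube (d : nat) := {ffun 'I_d -> bool}.

Definition hamming (d : nat) (X Y : cube d) : nat := #|[set i | X i != Y i]|.

Section Game.
Variables (R : realFieldType) (d : nat).

Definition is_distribution (mu : cube d -> R) : Prop :=
  (forall V, 0 <= mu V) /\ \sum_(V : cube d) mu V = 1.

Definition measure (mu : cube d -> R) (A : {set cube d}) : R :=
  \sum_(V in A) mu V.

Definition Vor (A B : cube d) : {set cube d} :=
  [set X | hamming X A < hamming X B]%N.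
Definition Tie (A B : cube d) : {set cube d} :=
  [set X | hamming X A == hamming X B].

Definition P1 (mu : cube d -> R) (A B : cube d) : R :=
  measure mu (Vor A B) + measure mu (Tie A B) / 2.
Definition P2 (mu : cube d -> R) (A B : cube d) : R :=
  measure mu (Vor B A) + measure mu (Tie A B) / 2.

Definition local_equilibrium (k : nat) (mu : cube d -> R) (A B : cube d) : Prop :=
  (forall A' : cube d, (hamming A A' <= k)%N -> P1 mu A' B <= P1 mu A B) /\
  (forall B' : cube d, (hamming B B' <= k)%N -> P2 mu A B' <= P2 mu A B).

Definition w0 (mu : cube d -> R) (i : 'I_d) : R :=
  measure mu [set X : cube d | ~~ X i].

Definition zero_vertex : cube d := [ffun _ => false].
End Game.

From mathcomp Require Import all_boot all_order all_algebra.
From mathcomp Require Import zify ring lra.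
Set Implicit Arguments.
Unset Strict Implicit.
Unset Printing Implicit Defensive.

Import Order.TTheory GRing.Theory Num.Theory.
Local Open Scope ring_scope.

(* Fix a challenger A at Hamming distance m <= k from 0, and let y(X) be the
   number of coordinates where both X and A equal 1.  Then
   d(X, A) = d(X, 0) + m - 2 y(X), so A wins X when 2 y > m and ties when
   2 y = m.  Pointwise, (m + 1) (2 [A wins X] + [tie at X]) <= 4 y + [m = 0];
   taking expectations, 2 (m + 1) P1(A, 0) <= 4 E[y] + [m = 0], and
   E[y] = sum_(i | A i) (1 - w_i^0) <= m (1 + 1/k) / 4.  Since m <= k the right
   side is at most m + 1, i.e. P1(A, 0) <= 1/2 = P1(0, 0). *)

Definition weight (d : nat) (X : cube d) : nat := \sum_i (X i : nat).

Definition overlap (d : nat) (X Y : cube d) : nat := \sum_i (X i && Y i : nat).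

Section Hamming.
Variable d : nat.
Implicit Types X Y : cube d.

Lemma hammingE X Y : hamming X Y = (\sum_i (X i != Y i : nat))%N.
Proof.
by rewrite /hamming -sum1_card big_mkcond; apply: eq_bigr => i _; rewrite inE.
Qed.

Lemma hamming_zero_vertexl Y : hamming (zero_vertex d) Y = weight Y.
Proof.
by rewrite hammingE; apply: eq_bigr => i _; rewrite ffunE; case: (Y i).
Qed.

Lemma hamming_zero_vertexr X : hamming X (zero_vertex d) = weight X.
Proof.
by rewrite hammingE; apply: eq_bigr => i _; rewrite ffunE; case: (X i).
Qed.

Lemma hamming_overlap X Y :
  (hamming X Y + 2 * overlap X Y = weight X + weight Y)%N.
Proof.
rewrite hammingE /overlap /weight big_distrr -!big_split /=.
by apply: eq_bigr => i _; case: (X i); case: (Y i).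
Qed.

Lemma overlap_le_weightr X Y : (overlap X Y <= weight Y)%N.
Proof. by apply: leq_sum => i _; case: (X i); case: (Y i). Qed.

Lemma challenger_score_le A X :
  ((weight A).+1 *
     (2 * (X \in Vor A (zero_vertex d)) + (X \in Tie A (zero_vertex d)))
   <= 4 * overlap X A + (weight A == 0))%N.
Proof.
have := hamming_overlap X A; have := overlap_le_weightr X A.
rewrite !inE hamming_zero_vertexr.
by case: ltnP; case: eqVneq; case: eqVneq => /=; lia.
Qed.

End Hamming.

Lemma quarter_bound_le (R : realFieldType) (m k : nat) :
  (0 < k)%N -> (m <= k)%N ->
  4 * (m%:R * (1 / 4 + 1 / (4 * k%:R))) + (m == 0%N)%:R <= m.+1%:R :> R.
Proof.
move=> k_gt0 le_mk; have k_pos : 0 < k%:R :> R by rewrite ltr0n.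
have -> : 4 * (m%:R * (1 / 4 + 1 / (4 * k%:R))) = m%:R + m%:R / k%:R :> R.
  by field; rewrite gt_eqF.
have : m%:R / k%:R <= 1 :> R by rewrite ler_pdivrMr // mul1r ler_nat.
rewrite -addn1 natrD; case: eqVneq => [->|_] /=; first by rewrite mul0r; lra.
lra.
Qed.

Section Payoffs.
Variables (R : realFieldType) (d : nat) (mu : cube d -> R).
Hypothesis mu_distr : is_distribution mu.

Lemma measureE (A : {set cube d}) :
  measure mu A = \sum_X mu X * (X \in A : nat)%:R.
Proof.
by rewrite /measure big_mkcond; apply: eq_bigr => X _; case: (X \in A);
  rewrite ?mulr1 ?mulr0.
Qed.

Lemma measureT : measure mu [set: cube d] = 1.
Proof.
by rewrite /measure (eq_bigl xpredT) ?(proj2 mu_distr) // => X; rewrite inE.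
Qed.

Lemma P2_P1 (A B : cube d) : P2 mu A B = P1 mu B A.
Proof.
rewrite /P2 /P1; congr (_ + measure _ _ / _).
by apply/setP => X; rewrite !inE eq_sym.
Qed.

Lemma P1_diag (A : cube d) : P1 mu A A = 1 / 2.
Proof.
rewrite /P1; have -> : Vor A A = set0 by apply/setP => X; rewrite !inE ltnn.
have -> : Tie A A = [set: cube d] by apply/setP => X; rewrite !inE eqxx.
by rewrite measureT /measure big_set0 add0r.
Qed.

Lemma mulr2_P1 (A B : cube d) :
  2 * P1 mu A B =
  \sum_X mu X * (2 * (X \in Vor A B) + (X \in Tie A B))%N%:R.
Proof.
rewrite /P1 !measureE mulrDr [2 * (_ / 2)]mulrC divfK ?pnatr_eq0 //.
rewrite mulr_sumr -big_split /=; apply: eq_bigr => X _.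
by rewrite natrD natrM mulrDr mulrCA mulrC.
Qed.

Lemma expected_overlap (A : cube d) :
  \sum_X mu X * (overlap X A)%:R = \sum_i (A i)%:R * (1 - w0 mu i).
Proof.
under eq_bigr => X _ do rewrite natr_sum mulr_sumr.
rewrite exchange_big /=; apply: eq_bigr => i _.
have -> : 1 - w0 mu i = \sum_X mu X * (X i : nat)%:R.
  rewrite /w0 -[X in X - _]measureT !measureE -sumrB; apply: eq_bigr => X _.
  by rewrite !inE; case: (X i); rewrite ?mulr1 ?mulr0 ?subr0 ?subrr.
rewrite mulr_sumr; apply: eq_bigr => X _.
by case: (A i); case: (X i); rewrite /= ?mulr1 ?mul1r ?mulr0 ?mul0r.
Qed.

Lemma P1_challenger_le_half (k : nat) (A : cube d) :
  (0 < k)%N -> (hamming (zero_vertex d) A <= k)%N ->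
  (forall i, 3 / 4 - 1 / (4 * k%:R) <= w0 mu i) ->
  P1 mu A (zero_vertex d) <= 1 / 2.
Proof.
rewrite hamming_zero_vertexl => k_gt0 le_mk w0_ge; set m := weight A.
have overlap_le :
    \sum_X mu X * (overlap X A)%:R <= m%:R * (1 / 4 + 1 / (4 * k%:R)).
  rewrite expected_overlap /m /weight natr_sum mulr_suml; apply: ler_sum => i _.
  by case: (A i); rewrite ?mul0r ?mul1r //; have := w0_ge i; lra.
have score_le : m.+1%:R * (2 * P1 mu A (zero_vertex d))
    <= 4 * \sum_X mu X * (overlap X A)%:R + (m == 0%N)%:R.
  have -> : (m == 0%N)%:R = \sum_X mu X * (m == 0%N)%:R :> R.
    by rewrite -mulr_suml (proj2 mu_distr) mul1r.
  rewrite mulr2_P1 !mulr_sumr -big_split /=.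
  apply: ler_sum => X _; rewrite mulrCA [4 * _]mulrCA -mulrDr.
  rewrite ler_wpM2l ?(proj1 mu_distr) // -!natrM -natrD ler_nat.
  exact: challenger_score_le.
have := quarter_bound_le R k_gt0 le_mk.
have : 0 < m.+1%:R :> R by rewrite ltr0n.
nra.
Qed.

End Payoffs.

Theorem mainTheorem4 (R : realFieldType) (d k : nat) (mu : cube d -> R) :
  (1 <= k)%N -> (k <= d)%N ->
  is_distribution mu ->
  (forall i : 'I_d, 3 / 4 - 1 / (4 * k%:R) <= w0 mu i) ->
  local_equilibrium k mu (zero_vertex d) (zero_vertex d).
Proof.
move=> k_gt0 _ mu_distr w0_ge.
by split=> A le_Ak; rewrite ?P2_P1 P1_diag //;
  exact: (P1_challenger_le_half mu_distr k_gt0).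
Qed.
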